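(* Let $K$ be an algebraically closed field and $\mathcal{T}$ a $\operatorname{Hom}$-finite Krull–Schmidt triangulated $K$-category with shift $[1]$. Let $\mathcal{I}$ be a functorially finite ideal of $\mathcal{T}$. Then $\mathcal{I}$ is an Auslander–Reiten ideal if and only if (1) $\mathrm{Gh}_{\mathcal{I}}=\mathrm{CoGh}_{\mathcal{I}[1]}$, and (2) for every indecomposable object $X\in\mathcal{T}$ with $X\notin\operatorname{Ob}(\mathcal{I})$, each $\mathrm{Gh}_{\mathcal{I}}$-source map of $X$ is a $\mathrm{Gh}_{\mathcal{I}}$-sink map, and each $\mathrm{Gh}_{\mathcal{I}}$-sink map of $X[1]$ is a $\mathrm{Gh}_{\mathcal{I}}$-source map.
   Context: Composition of $f:X\to Y$ and $g:Y\to Z$ is written $gf$. An ideal $\mathcal{I}$ of $\mathcal{T}$ is a collection of subgroups $\mathcal{I}(X,Y)\subseteq\operatorname{Hom}(X,Y)$ with $hgf\in\mathcal{I}$ whenever $g\in\mathcal{I}$. $\mathcal{I}[1]=\{f[1]: f\in\mathcal{I}\}$. $\operatorname{Ob}(\mathcal{I})$ is the full subcategory of objects $X$ with $\mathrm{id}_X\in\mathcal{I}$. $\mathrm{Gh}_{\mathcal{I}}=\{f: fi=0 \text{ for all } i\in\mathcal{I} \text{ composable with } f\}$ and $\mathrm{CoGh}_{\mathcal{I}}=\{f: if=0 \text{ for all } i\in\mathcal{I}\text{ composable with } f\}$; these are ideals. For an ideal $\mathcal{A}$: a morphism $i:X\to T$ is a right $\mathcal{A}$-approximation of $T$ if $i\in\mathcal{A}$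 and every $j:X'\to T$ in $\mathcal{A}$ factors through $i$; left $\mathcal{A}$-approximations are dual. $\mathcal{A}$ is functorially finite if every object has both a left and a right $\mathcal{A}$-approximation. A morphism $f:X\to M$ is left minimal if it has no direct summand of the form $0\to M_1$ with $M_1\neq 0$ (equivalently $gf=f$ implies $g$ is an isomorphism); right minimal dually. An $\mathcal{A}$-source map (resp. $\mathcal{A}$-sink map) of an object is a left minimal left $\mathcal{A}$-approximation of it (resp. right minimal right $\mathcal{A}$-approximation of it). A functorially finite ideal $\mathcal{I}$ is an Auslander–Reiten ideal if for every $X\in\mathcal{T}$ there is a triangle $X\xrightarrow{f}M\xrightarrow{g}Y\to X[1]$ with $f$ a left $\mathcal{I}$-approximation and $g$ a right $\mathcal{I}$-approximation, and for every $Y\in\mathcal{T}$ there is a triangle $Z\xrightarrow{u}N\xrightarrow{v}Y\to Z[1]$ with $u$ a left $\mathcal{I}$-approximation and $v$ a right $\mathcal{I}$-approximation. *)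

From HB Require Import structures.
From mathcomp Require Import all_boot all_order all_algebra.
Set Implicit Arguments. Unset Strict Implicit. Unset Printing Implicit Defensive.
Import GRing.Theory.
Local Open Scope ring_scope.

(* A K-linear category whose Mor spaces are finite-dimensional K-vector spaces
   (vectType = finite-dimensional vector space): Mor-finite K-category. *)
Record KCat (K : fieldType) := {
  Obj :> Type;
  Mor : Obj -> Obj -> vectType K;
  idm : forall X, Mor X X;
  comp : forall X Y Z, Mor Y Z -> Mor X Y -> Mor X Z;
  compA : forall X Y Z W (h : Mor Z W) (g : Mor Y Z) (f : Mor X Y),
      comp h (comp g f) = comp (comp h g) f;
  comp_id_l : forall X Y (f : Mor X Y), comp (idm Y) f = f;
  comp_id_r : forall X Y (f : Mor X Y), comp f (idm X) = f;
  comp_linl : forall X Y Z (f : Mor X Y) (a : K) (g1 g2 : Mor Y Z),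
      comp (a *: g1 + g2) f = a *: comp g1 f + comp g2 f;
  comp_linr : forall X Y Z (g : Mor Y Z) (a : K) (f1 f2 : Mor X Y),
      comp g (a *: f1 + f2) = a *: comp g f1 + comp g f2
}.
Arguments Mor {K C} X Y : rename.
Arguments idm {K C} X : rename.
Arguments comp {K C X Y Z} g f : rename.

Section Basic.
Variables (K : fieldType) (C : KCat K).

Definition iso (X Y : C) (f : Mor X Y) :=
  exists g : Mor Y X, comp g f = idm X /\ comp f g = idm Y.

Definition is_zero (X : C) := idm X = 0.

Definition is_biproduct (A B S : C) (i1 : Mor A S) (i2 : Mor B S)
  (p1 : Mor S A) (p2 : Mor S B) :=
  [/\ comp p1 i1 = idm A, comp p2 i2 = idm B, comp p2 i1 = 0, comp p1 i2 = 0
    & comp i1 p1 + comp i2 p2 = idm S].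

Definition additive :=
  (exists Z : C, is_zero Z) /\
  forall A B : C, exists (S : C) (i1 : Mor A S) (i2 : Mor B S)
    (p1 : Mor S A) (p2 : Mor S B), is_biproduct i1 i2 p1 p2.

Definition local_end (X : C) :=
  idm X != 0 /\ forall a : Mor X X, iso a \/ iso (idm X - a).

Definition krull_schmidt :=
  forall X : C, exists (n : nat) (Xs : 'I_n -> C)
    (inj : forall i, Mor (Xs i) X) (pr : forall i, Mor X (Xs i)),
    [/\ forall i, comp (pr i) (inj i) = idm (Xs i),
        forall i j, i != j -> comp (pr j) (inj i) = 0,
        \sum_(i < n) comp (inj i) (pr i) = idm X
      & forall i, local_end (Xs i)].

Definition indecomposable (X : C) :=
  ~ is_zero X /\
  forall (A B : C) (i1 : Mor A X) (i2 : Mor B X) (p1 : Mor X A) (p2 : Mor X B),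
    is_biproduct i1 i2 p1 p2 -> is_zero A \/ is_zero B.

End Basic.

Record Triangulated (K : fieldType) (C : KCat K) := {
  sh : C -> C;
  shm : forall X Y : C, Mor X Y -> Mor (sh X) (sh Y);
  shm_lin : forall (X Y : C) (a : K) (f g : Mor X Y),
      shm (a *: f + g) = a *: shm f + shm g;
  shm_id : forall X : C, shm (idm X) = idm (sh X);
  shm_comp : forall (X Y Z : C) (g : Mor Y Z) (f : Mor X Y),
      shm (comp g f) = comp (shm g) (shm f);
  shm_inj : forall (X Y : C) (f g : Mor X Y), shm f = shm g -> f = g;
  shm_surj : forall (X Y : C) (g : Mor (sh X) (sh Y)), exists f, shm f = g;
  sh_esurj : forall Y : C, exists (X : C) (a : Mor (sh X) Y), iso a;
  dist : forall X Y Z : C, Mor X Y -> Mor Y Z -> Mor Z (sh X) -> Prop;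
  dist_iso : forall (X Y Z X' Y' Z' : C)
      (f : Mor X Y) (g : Mor Y Z) (h : Mor Z (sh X))
      (f' : Mor X' Y') (g' : Mor Y' Z') (h' : Mor Z' (sh X'))
      (a : Mor X X') (b : Mor Y Y') (c : Mor Z Z'),
      dist f g h -> iso a -> iso b -> iso c ->
      comp b f = comp f' a -> comp c g = comp g' b ->
      comp (shm a) h = comp h' c -> dist f' g' h';
  dist_idm : forall X Z : C, is_zero Z ->
      dist (idm X) (0 : Mor X Z) (0 : Mor Z (sh X));
  dist_ext : forall (X Y : C) (f : Mor X Y),
      exists (Z : C) (g : Mor Y Z) (h : Mor Z (sh X)), dist f g h;
  dist_rot : forall (X Y Z : C) (f : Mor X Y) (g : Mor Y Z) (h : Mor Z (sh X)),
      dist f g h <-> dist g h (- shm f);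
  dist_morph : forall (X Y Z X' Y' Z' : C)
      (f : Mor X Y) (g : Mor Y Z) (h : Mor Z (sh X))
      (f' : Mor X' Y') (g' : Mor Y' Z') (h' : Mor Z' (sh X'))
      (a : Mor X X') (b : Mor Y Y'),
      dist f g h -> dist f' g' h' -> comp b f = comp f' a ->
      exists c : Mor Z Z', comp c g = comp g' b /\ comp (shm a) h = comp h' c;
  dist_oct : forall (X Y Z Z' X' Y' : C)
      (u : Mor X Y) (j : Mor Y Z') (k : Mor Z' (sh X))
      (v : Mor Y Z) (l : Mor Z X') (i : Mor X' (sh Y))
      (m : Mor Z Y') (n : Mor Y' (sh X)),
      dist u j k -> dist v l i -> dist (comp v u) m n ->
      exists (f : Mor Z' Y') (g : Mor Y' X'),
        [/\ dist f g (comp (shm j) i),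
            comp m v = comp f j, k = comp n f, l = comp g m
          & comp (shm u) n = comp i g]
}.
Arguments sh {K C} T X : rename.
Arguments shm {K C} T {X Y} f : rename.
Arguments dist {K C} T {X Y Z} f g h : rename.

Section Ideals.
Variables (K : fieldType) (C : KCat K).

Definition mor_class := forall X Y : C, Mor X Y -> Prop.

Definition is_ideal (I : mor_class) :=
  [/\ forall X Y : C, I X Y 0,
      forall (X Y : C) (f g : Mor X Y), I X Y f -> I X Y g -> I X Y (f - g)
    & forall (W X Y Z : C) (f : Mor W X) (g : Mor X Y) (h : Mor Y Z),
        I X Y g -> I W Z (comp h (comp g f))].

Definition ObI (I : mor_class) (X : C) := I X X (idm X).

Definition Gh (I : mor_class) : mor_class := fun X Y f =>
  forall (W : C) (i : Mor W X), I W X i -> comp f i = 0.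

Definition CoGh (I : mor_class) : mor_class := fun X Y f =>
  forall (W : C) (i : Mor Y W), I Y W i -> comp i f = 0.

(* I[1] = { f[1] : f in I }, transported along isomorphisms X ~ X'[1] *)
Definition shift_ideal (T : Triangulated C) (I : mor_class) : mor_class :=
  fun X Y g => exists (X' Y' : C) (a : Mor X (sh T X')) (b : Mor (sh T Y') Y)
    (f : Mor X' Y'), [/\ iso a, iso b, I X' Y' f & g = comp b (comp (shm T f) a)].

Definition right_approx (A : mor_class) (X T : C) (i : Mor X T) :=
  A X T i /\ forall (X' : C) (j : Mor X' T), A X' T j ->
    exists h : Mor X' X, j = comp i h.

Definition left_approx (A : mor_class) (T X : C) (i : Mor T X) :=
  A T X i /\ forall (X' : C) (j : Mor T X'), A T X' j ->
    exists h : Mor X X', j = comp h i.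

Definition functorially_finite (A : mor_class) :=
  forall T : C, (exists (X : C) (i : Mor T X), left_approx A i) /\
                (exists (X : C) (i : Mor X T), right_approx A i).

Definition left_minimal (X M : C) (f : Mor X M) :=
  forall g : Mor M M, comp g f = f -> iso g.

Definition right_minimal (M Y : C) (f : Mor M Y) :=
  forall g : Mor M M, comp f g = f -> iso g.

Definition source_map (A : mor_class) (X M : C) (f : Mor X M) :=
  left_approx A f /\ left_minimal f.

Definition sink_map (A : mor_class) (M Y : C) (f : Mor M Y) :=
  right_approx A f /\ right_minimal f.

Definition AR_ideal (T : Triangulated C) (I : mor_class) :=
  [/\ functorially_finite I,
      forall X : C, exists (M Y : C) (f : Mor X M) (g : Mor M Y) (h : Mor Y (sh T X)),
        [/\ dist T f g h, left_approx I f & right_approx I g]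
    & forall Y : C, exists (Z N : C) (u : Mor Z N) (v : Mor N Y) (w : Mor Y (sh T Z)),
        [/\ dist T u v w, left_approx I u & right_approx I v]].

End Ideals.

(* In a triangle Z -u-> N -v-> Y -w-> Z[1] with u a left and v a right
   I-approximation, w is a left Gh_I-approximation of Y and, once ghosts and
   I[1]-coghosts agree, a right Gh_I-approximation of Z[1]; conversely,
   completing a morphism w that is both kinds of approximation to a triangle
   produces such u and v.  At an indecomposable X outside Ob(I), a minimal
   one-sided Gh_I-approximation and such a two-sided one factor through each
   other, so minimality turns source maps into sink maps and back.  Conversely,
   condition (2) provides two-sided approximations at indecomposable objects,
   and the Krull-Schmidt decomposition adds them up.  Minimal approximations
   exist by Fitting's lemma and the splitting of idempotents. *)

From HB Require Import structures.
From mathcomp Require Import all_boot all_order all_algebra.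
From Stdlib Require Import Classical.
Import GRing.Theory.
(* Imported after GRing.Theory, so that [additive] is Defs.additive. *)
From Pilot Require Import Defs.

Set Implicit Arguments. Unset Strict Implicit. Unset Printing Implicit Defensive.
Local Open Scope ring_scope.

Section Composition.
Variables (K : fieldType) (C : KCat K).
Implicit Types X Y Z W : C.

Lemma compDl X Y Z (f : Mor X Y) (g1 g2 : Mor Y Z) :
  comp (g1 + g2) f = comp g1 f + comp g2 f.
Proof. by have := comp_linl f 1 g1 g2; rewrite !scale1r. Qed.

Lemma compDr X Y Z (g : Mor Y Z) (f1 f2 : Mor X Y) :
  comp g (f1 + f2) = comp g f1 + comp g f2.
Proof. by have := comp_linr g 1 f1 f2; rewrite !scale1r. Qed.

Lemma comp0l X Y Z (f : Mor X Y) : comp (0 : Mor Y Z) f = 0.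
Proof. by apply: (addrI (comp 0 f)); rewrite -compDl !addr0. Qed.

Lemma comp0r X Y Z (g : Mor Y Z) : comp g (0 : Mor X Y) = 0.
Proof. by apply: (addrI (comp g 0)); rewrite -compDr !addr0. Qed.

Lemma compZl X Y Z (f : Mor X Y) a (g : Mor Y Z) : comp (a *: g) f = a *: comp g f.
Proof. by have := comp_linl f a g 0; rewrite !addr0 comp0l addr0. Qed.

Lemma compZr X Y Z (g : Mor Y Z) a (f : Mor X Y) : comp g (a *: f) = a *: comp g f.
Proof. by have := comp_linr g a f 0; rewrite !addr0 comp0r addr0. Qed.

Lemma compNl X Y Z (f : Mor X Y) (g : Mor Y Z) : comp (- g) f = - comp g f.
Proof. by rewrite -scaleN1r compZl scaleN1r. Qed.

Lemma compNr X Y Z (g : Mor Y Z) (f : Mor X Y) : comp g (- f) = - comp g f.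
Proof. by rewrite -scaleN1r compZr scaleN1r. Qed.

Lemma compBl X Y Z (f : Mor X Y) (g1 g2 : Mor Y Z) :
  comp (g1 - g2) f = comp g1 f - comp g2 f.
Proof. by rewrite compDl compNl. Qed.

Lemma compBr X Y Z (g : Mor Y Z) (f1 f2 : Mor X Y) :
  comp g (f1 - f2) = comp g f1 - comp g f2.
Proof. by rewrite compDr compNr. Qed.

Lemma comp_suml X Y Z (f : Mor X Y) I (r : seq I) (P : pred I) (F : I -> Mor Y Z) :
  comp (\sum_(i <- r | P i) F i) f = \sum_(i <- r | P i) comp (F i) f.
Proof. by apply: (big_morph (comp^~ f)); [exact: compDl | exact: comp0l]. Qed.

Lemma comp_sumr X Y Z (g : Mor Y Z) I (r : seq I) (P : pred I) (F : I -> Mor X Y) :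
  comp g (\sum_(i <- r | P i) F i) = \sum_(i <- r | P i) comp g (F i).
Proof. by apply: (big_morph (comp g)); [exact: compDr | exact: comp0r]. Qed.

Lemma compA_mid X Y Z W V (d : Mor W V) (c : Mor Z W) (b : Mor Y Z) (a : Mor X Y) :
  comp (comp d c) (comp b a) = comp d (comp (comp c b) a).
Proof. by rewrite !compA. Qed.

Lemma mor_from_zero X Y (f : Mor X Y) : is_zero X -> f = 0.
Proof. by move=> X0; rewrite -(comp_id_r f) X0 comp0r. Qed.

Lemma mor_to_zero X Y (f : Mor X Y) : is_zero Y -> f = 0.
Proof. by move=> Y0; rewrite -(comp_id_l f) Y0 comp0l. Qed.

Lemma iso_idm X : iso (idm X).
Proof. by exists (idm X); rewrite comp_id_l. Qed.

Lemma iso_comp X Y Z (f : Mor X Y) (g : Mor Y Z) : iso f -> iso g -> iso (comp g f).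
Proof.
move=> [f' [f'f ff']] [g' [g'g gg']]; exists (comp f' g').
by rewrite !compA_mid g'g ff' !comp_id_l f'f gg'.
Qed.

Definition idempotent X (e : Mor X X) := comp e e = e.

Definition splits X (e : Mor X X) :=
  exists (Q : C) (r : Mor X Q) (s : Mor Q X), comp r s = idm Q /\ comp s r = e.

Lemma idempotent_iso X (e : Mor X X) : idempotent e -> iso e -> e = idm X.
Proof. by move=> ee [g [ge _]]; rewrite -ge -{2}ee compA ge comp_id_l. Qed.

Lemma idempotent_idmB X (e : Mor X X) : idempotent e -> idempotent (idm X - e).
Proof.
move=> ee; rewrite /idempotent compBl !compBr !comp_id_l comp_id_r ee.
by rewrite subrr subr0.
Qed.

End Composition.

Section Fitting.
Variables (K : fieldType) (C : KCat K) (X : C).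
Implicit Types g u : Mor X X.

Fixpoint powm g n : Mor X X := if n is n'.+1 then comp g (powm g n') else idm X.

Lemma powmD g m n : powm g (m + n) = comp (powm g m) (powm g n).
Proof. by elim: m => [|m IH] /=; rewrite ?comp_id_l // IH compA. Qed.

Lemma powmSr g n : powm g n.+1 = comp (powm g n) g.
Proof. by rewrite -addn1 powmD /= comp_id_r. Qed.

Lemma powm_comm g u n : comp g u = comp u g -> comp (powm g n) u = comp u (powm g n).
Proof.
move=> gu; elim: n => [|n IH] /=; first by rewrite comp_id_l comp_id_r.
by rewrite -compA IH !compA gu.
Qed.

Lemma powm_commM g u n : comp g u = comp u g ->
  powm (comp g u) n = comp (powm g n) (powm u n).
Proof.
move=> gu; elim: n => [|n IH] /=; first by rewrite comp_id_l.
by rewrite IH -!compA; congr comp; rewrite !compA (powm_comm _ gu).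
Qed.

Lemma span_powm g a n (v : Mor X X) :
  v \in <<[seq powm g j | j <- iota a n]>>%VS ->
  exists2 u, v = comp (powm g a) u & comp g u = comp u g.
Proof.
set s := [seq _ | _ <- _] => sv; rewrite (coord_span (X := in_tuple s) sv).
exists (\sum_(i < size s) coord (in_tuple s) i v *: powm g i).
  rewrite comp_sumr; apply: eq_bigr => i _; rewrite compZr -powmD.
  have ltin : (i < n)%N by rewrite -(size_iota a n) -(size_map (powm g)) ltn_ord.
  by rewrite /= (nth_map 0%N) ?size_iota // nth_iota.
rewrite comp_sumr comp_suml; apply: eq_bigr => i _.
by rewrite compZr compZl -[comp g _]/(powm g i.+1) powmSr.
Qed.

Lemma fitting_relation g : ~ iso g ->
  exists m u, comp g u = comp u g /\ powm g m.+1 = comp (powm g m.+2) u.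
Proof.
move=> g_niso; set D := \dim (fullv : {vspace Mor X X}).
set s := [seq powm g j | j <- iota 0 D.+1].
have : ~~ free (in_tuple s).
  apply/negP => /eqP free_s; have := dimvS (subvf <<s>>%VS).
  by rewrite /= free_s size_map size_iota ltnn.
rewrite freeNE => /existsP [i].
have ltiD : (i < D.+1)%N by rewrite -(size_iota 0 D.+1) -(size_map (powm g)) ltn_ord.
rewrite /= (nth_map 0%N) ?size_iota // nth_iota // add0n -map_drop drop_iota.
case/span_powm=> u; rewrite add1n; case: (nat_of_ord i) => [|m] gi gu.
  by rewrite /= comp_id_r in gi; case: g_niso; exists u; rewrite -gu -gi.
by exists m, u.
Qed.

(* Fitting's lemma; the idempotent is g^(m+1) u^(m+1). *)
Lemma fitting_idempotent W g (f : Mor W X) : ~ iso g -> comp g f = f ->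
  exists e, [/\ idempotent e, comp e f = f & e <> idm X].
Proof.
move=> g_niso gf; have [m [u [gu Gu]]] := fitting_relation g_niso.
set G := powm g m.+1 in Gu *; set U := powm u m.+1.
have Ggu : G = comp G (comp g u) by rewrite {1}Gu powmSr compA.
have G_gu j : G = comp G (powm (comp g u) j).
  by elim: j => [|j IH] /=; rewrite ?comp_id_r // compA -Ggu.
have GGU : comp G (comp G U) = G by rewrite -powm_commM // -G_gu.
have Ug : comp U g = comp g U by apply: powm_comm.
have UG : comp U G = comp G U by apply: powm_comm; symmetry; apply: powm_comm.
have Gf : comp G f = f.
  by rewrite /G; elim: m.+1 => [|k IH] /=; rewrite ?comp_id_l // -compA IH.
have eG : comp (comp G U) G = G by rewrite -compA UG GGU.
exists (comp G U); split.
- by rewrite /idempotent -compA (compA U) UG compA GGU.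
- by rewrite -{1}Gf compA eG.
- move=> GU1; apply: g_niso; exists (comp (powm g m) U); split.
    by rewrite -compA Ug compA -powmSr GU1.
  by rewrite compA GU1.
Qed.

End Fitting.

Section IdealClasses.
Variables (K : fieldType) (C : KCat K) (A : mor_class C).
Hypothesis A_ideal : is_ideal A.
Implicit Types X Y Z W : C.

Lemma ideal0 X Y : A (0 : Mor X Y).
Proof. by case: A_ideal. Qed.

Lemma idealB X Y (f g : Mor X Y) : A f -> A g -> A (f - g).
Proof. by case: A_ideal => _ + _; apply. Qed.

Lemma idealD X Y (f g : Mor X Y) : A f -> A g -> A (f + g).
Proof.
move=> Af Ag; rewrite -[g]opprK; apply: idealB => //.
rewrite -sub0r; exact: (idealB (ideal0 X Y) Ag).
Qed.

Lemma ideal_compl X Y Z (h : Mor Y Z) (g : Mor X Y) : A g -> A (comp h g).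
Proof. by case: A_ideal => _ _ Acomp /(Acomp _ _ _ _ (idm X) g h); rewrite comp_id_r. Qed.

Lemma ideal_compr W X Y (g : Mor X Y) (f : Mor W X) : A g -> A (comp g f).
Proof. by case: A_ideal => _ _ Acomp /(Acomp _ _ _ _ f g (idm Y)); rewrite comp_id_l. Qed.

End IdealClasses.

Section Splitting.
Variables (K : fieldType) (C : KCat K).
Hypothesis Hadd : additive C.
Implicit Types X Y Z M : C.

(* Decompositions are recorded by orthogonal idempotents rather than by objects:
   partial sums of summands only become objects once idempotents split. *)
Inductive local_sum M : Mor M M -> Prop :=
| local_sum0 : local_sum 0
| local_sumD E X (i : Mor X M) (p : Mor M X) :
    local_sum E -> local_end X -> comp p i = idm X -> comp E i = 0 ->
    comp p E = 0 -> local_sum (E + comp i p).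

Lemma local_sum_idempotent M (E : Mor M M) : local_sum E -> idempotent E.
Proof.
elim=> [|{}E X i p _ EE _ pi Ei pE]; first exact: comp0l.
rewrite /idempotent compDl !compDr EE -compA pE comp0r compA Ei comp0l.
by rewrite compA_mid pi comp_id_l addr0 add0r.
Qed.

Lemma krull_schmidt_local_sum : krull_schmidt C -> forall M, local_sum (idm M).
Proof.
move=> HKS M; have [n [Xs [inj [pr [pr_inj pr_inj0 sum_id loc]]]]] := HKS M.
suff sum_local r : uniq r -> local_sum (\sum_(k <- r) comp (inj k) (pr k)).
  by rewrite -sum_id; apply: sum_local; apply: index_enum_uniq.
elim: r => [|j r IH] /=; first by rewrite big_nil; constructor.
case/andP=> jNr r_uniq; rewrite big_cons addrC.
apply: local_sumD; [exact: IH | exact: loc | exact: pr_inj | |].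
- rewrite comp_suml big_seq big1 // => k kr; rewrite -compA pr_inj0 ?comp0r //.
  by apply: contraNneq jNr => ->.
- rewrite comp_sumr big_seq big1 // => k kr; rewrite compA pr_inj0 ?comp0l //.
  by apply: contraNneq jNr => <-.
Qed.

Lemma splits0 M : splits (0 : Mor M M).
Proof.
have [Z Z0] := Hadd.1; exists Z, 0, 0.
by rewrite !comp0l Z0.
Qed.

Lemma splitsD M (e1 e2 : Mor M M) : splits e1 -> splits e2 ->
  comp e1 e2 = 0 -> comp e2 e1 = 0 -> splits (e1 + e2).
Proof.
move=> [Q1 [r1 [s1 [rs1 sr1]]]] [Q2 [r2 [s2 [rs2 sr2]]]] e12 e21.
have r_fix Q (r : Mor M Q) (s : Mor Q M) : comp r s = idm Q -> comp r (comp s r) = r.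
  by move=> rs; rewrite compA rs comp_id_l.
have s_fix Q (r : Mor M Q) (s : Mor Q M) : comp r s = idm Q -> comp (comp s r) s = s.
  by move=> rs; rewrite -compA rs comp_id_r.
have r1s2 : comp r1 s2 = 0.
  by rewrite -(r_fix _ _ _ rs1) -(s_fix _ _ _ rs2) sr1 sr2 compA_mid e12 comp0l comp0r.
have r2s1 : comp r2 s1 = 0.
  by rewrite -(r_fix _ _ _ rs2) -(s_fix _ _ _ rs1) sr1 sr2 compA_mid e21 comp0l comp0r.
have [B [j1 [j2 [q1 [q2 [qj1 qj2 qj21 qj12 jq]]]]]] := Hadd.2 Q1 Q2.
exists B, (comp j1 r1 + comp j2 r2), (comp s1 q1 + comp s2 q2).
rewrite !compDl !compDr !compA_mid rs1 rs2 r1s2 r2s1 qj1 qj2 qj21 qj12.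
by rewrite !comp0l !comp0r !comp_id_l !addr0 !add0r jq sr1 sr2.
Qed.

Lemma splits_retract M M' (g : Mor M M) (i : Mor M' M) (p : Mor M M') :
  idempotent g -> comp g (comp i p) = g -> splits (comp p (comp g i)) -> splits g.
Proof.
move=> gg gip [Q [r [s [rs sr]]]].
have gip' W (x : Mor W M) : comp g (comp i (comp p x)) = comp g x.
  by rewrite (compA i) compA gip.
exists Q, (comp r (comp p g)), (comp g (comp i s)); split.
  by rewrite -!compA (compA g g) gg (compA g i) (compA p) -sr -compA rs comp_id_r rs.
by rewrite -!compA (compA s r) sr -!compA gip' compA gg gip' gg.
Qed.

Section LocalComplement.
Variables (M X : C) (E' : Mor M M) (i : Mor X M) (p : Mor M X).
Hypothesis E'E' : idempotent E'.
Hypothesis split_below_E' : forall g : Mor M M,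
  idempotent g -> comp g E' = g -> comp E' g = g -> splits g.

(* [q + s b p = E' + i p] below makes [s] a substitute for [i]: an idempotent
   [g] killing [s] satisfies [g q = g], so conjugating by [q] moves it below [E']. *)
Lemma splits_complement (s : Mor X M) (b : Mor X X) (g : Mor M M) :
  comp (E' + comp i p) s = s -> comp (comp p s) b = idm X ->
  idempotent g -> comp g (E' + comp i p) = g -> comp g s = 0 -> splits g.
Proof.
move=> Es psb gg gE gs.
set q := E' - comp E' (comp s (comp b p)).
have sE's : s - comp E' s = comp i (comp p s).
  by rewrite -{1}Es compDl addrC addKr -compA.
have q_sbp : q + comp s (comp b p) = E' + comp i p.
  rewrite /q -addrA; congr (_ + _).
  by rewrite addrC (compA E') -compBl sE's compA_mid psb comp_id_l.
have gq : comp g q = g.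
  by rewrite -[q](addrK (comp s (comp b p))) q_sbp compBr gE compA gs comp0l subr0.
have E'q : comp E' q = q by rewrite /q compBr E'E' (compA E') E'E'.
apply: (splits_retract gg (i := E') (p := q)); first by rewrite E'q gq.
apply: split_below_E'.
- by rewrite /idempotent -!compA (compA E' q) E'q (compA g q) gq (compA g g) gg.
- by rewrite -!compA E'E'.
- by rewrite compA E'q.
Qed.

End LocalComplement.

Lemma local_sum_splits M (E : Mor M M) : local_sum E ->
  forall e, idempotent e -> comp e E = e -> comp E e = e -> splits e.
Proof.
elim=> [|{}E X i p lsE IH Xloc pi Ei pE] e ee eE Ee.
  by rewrite -eE comp0r; apply: splits0.
have EE := local_sum_idempotent lsE.
set a := comp p (comp e i).
(* Either [X] splits off [e] through [e i], or [e] lies in a complement of [X]. *)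
case: (Xloc.2 a) => [[b [ba ab]] | [b [ba ab]]].
  set s := comp e i; set r1 := comp b (comp p e); set e1 := comp s r1.
  have Es : comp (E + comp i p) s = s by rewrite /s compA Ee.
  have r1s : comp r1 s = idm X by rewrite /r1 /s -!compA (compA e e) ee; exact: ba.
  have e1e1 : comp e1 e1 = e1 by rewrite compA_mid r1s comp_id_l.
  have ee1 : comp e e1 = e1 by rewrite /e1 /s compA compA ee.
  have e1e : comp e1 e = e1 by rewrite /e1 /r1 -!compA ee.
  have gg : idempotent (e - e1).
    by rewrite /idempotent compBl !compBr ee ee1 e1e e1e1 subrr subr0.
  have gE : comp (e - e1) (E + comp i p) = e - e1.
    by rewrite compBl eE /e1 /r1 -!compA eE.
  have gs : comp (e - e1) s = 0.
    by rewrite compBl /s compA ee -/s /e1 -compA r1s comp_id_r subrr.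
  have splits_g := splits_complement EE IH Es ab gg gE gs.
  rewrite -[e](subrK e1); apply: splitsD => //.
  - by exists X, r1, s.
  - by rewrite compBl ee1 e1e1 subrr.
  - by rewrite compBr e1e e1e1 subrr.
set s := comp (E + comp i p - e) i.
have EipEip := local_sum_idempotent (local_sumD lsE Xloc pi Ei pE).
have Es' : comp (E + comp i p) s = s by rewrite /s compA compBr EipEip Ee.
have psb : comp (comp p s) b = idm X.
  rewrite -ab /s (compA p) compBr compDr pE add0r (compA p i) pi comp_id_l.
  by rewrite compBl pi -compA.
have es : comp e s = 0 by rewrite /s compA compBr eE ee subrr comp0l.
exact: (splits_complement EE IH Es' psb ee eE es).
Qed.

Theorem idempotent_splits : krull_schmidt C ->
  forall M (e : Mor M M), idempotent e -> splits e.
Proof.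
move=> HKS M e ee; apply: local_sum_splits (krull_schmidt_local_sum HKS M) _ ee _ _.
  exact: comp_id_r.
exact: comp_id_l.
Qed.

End Splitting.

Section LocalObjects.
Variables (K : fieldType) (C : KCat K).
Implicit Types X Y A : C.

Lemma iso_local_end A X (i : Mor A X) : iso i -> local_end A -> local_end X.
Proof.
move=> [p [pi ip]] [A_nz Aloc]; split.
  apply: contra A_nz => /eqP X0; apply/eqP.
  by rewrite -pi -(comp_id_l i) X0 comp0l comp0r.
have iso_p : iso p by exists i.
have iso_conj b : iso b -> iso (comp i (comp b p)).
  by move=> iso_b; apply: iso_comp; [apply: iso_comp | exists p].
move=> a; have a_conj : a = comp i (comp (comp p (comp a i)) p).
  by rewrite -!compA ip comp_id_r compA ip comp_id_l.
case: (Aloc (comp p (comp a i))) => iso_b; [left | right].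
  by rewrite a_conj; apply: iso_conj.
by rewrite -ip {1}a_conj -compBr -{1}(comp_id_l p) -compBl; apply: iso_conj.
Qed.

Lemma local_end_indecomposable X : local_end X -> indecomposable X.
Proof.
move=> [X_nz Xloc]; split=> [X0|A B i1 i2 p1 p2 [p1i1 p2i2 p2i1 p1i2 _]].
  by rewrite X0 eqxx in X_nz.
have e_idem : idempotent (comp i1 p1) by rewrite /idempotent compA_mid p1i1 comp_id_l.
case: (Xloc (comp i1 p1)) => [e_iso | e'_iso]; [right | left].
  rewrite /is_zero -p2i2 -(comp_id_l i2) -(idempotent_iso e_idem e_iso).
  by rewrite -compA p1i2 !comp0r.
have e0 : comp i1 p1 = 0.
  have := idempotent_iso (idempotent_idmB e_idem) e'_iso.
  by rewrite -{2}[idm X]subr0 => /addrI /oppr_inj.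
by rewrite /is_zero -p1i1 -{1}[comp p1 i1]comp_id_l -{1}p1i1 compA_mid e0 comp0l comp0r.
Qed.

End LocalObjects.

Section KrullSchmidt.
Variables (K : fieldType) (C : KCat K).
Hypotheses (Hadd : additive C) (HKS : krull_schmidt C).
Implicit Types X A : C.

Lemma retract_biproduct A X (i : Mor A X) (p : Mor X A) : comp p i = idm A ->
  exists Q (s : Mor Q X) (r : Mor X Q), is_biproduct i s p r.
Proof.
move=> pi; set e := idm X - comp i p.
have e_idem : idempotent e.
  by apply: idempotent_idmB; rewrite /idempotent compA_mid pi comp_id_l.
have [Q [r [s [rs sr]]]] := idempotent_splits Hadd HKS e_idem.
have ei : comp e i = 0 by rewrite compBl comp_id_l -compA pi comp_id_r subrr.
have pe : comp p e = 0 by rewrite compBr comp_id_r compA pi comp_id_l subrr.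
exists Q, s, r; split=> //.
- by rewrite -(comp_id_l r) -rs -!compA (compA s r) sr ei comp0r.
- by rewrite -(comp_id_r s) -rs (compA s r) sr compA pe comp0l.
- by rewrite sr addrC subrK.
Qed.

Lemma indecomposable_local_end X : indecomposable X -> local_end X.
Proof.
move=> [X_nz Xind]; have := krull_schmidt_local_sum HKS X.
move eqE: (idm X) => E lsE; case: lsE eqE => [|E' A i p _ Aloc pi _ _] idX.
  by case: X_nz.
have [Q [s [r bip]]] := retract_biproduct pi.
case: (Xind _ _ _ _ _ _ bip) => [A0 | Q0].
  by case: Aloc => A_nz _; rewrite A0 eqxx in A_nz.
apply: (iso_local_end (i := i)) Aloc; exists p; split=> //.
by case: bip => _ _ _ _ <-; rewrite (mor_to_zero r Q0) comp0r addr0.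
Qed.

End KrullSchmidt.

Section Opposite.
Variables (K : fieldType) (C : KCat K).

Definition op_KCat : KCat K :=
  @Build_KCat K C (fun X Y => Mor Y X) (fun X => idm X) (fun X Y Z g f => comp f g)
    (fun X Y Z W h g f => esym (compA f g h))
    (fun X Y f => comp_id_r f) (fun X Y f => comp_id_l f)
    (fun X Y Z f a g1 g2 => comp_linr f a g1 g2)
    (fun X Y Z g a f1 f2 => comp_linl g a f1 f2).

Definition op_class (A : mor_class C) : mor_class op_KCat := fun X Y f => A Y X f.

Lemma op_iso (X Y : C) (f : Mor X Y) : @iso _ op_KCat Y X f <-> iso f.
Proof. by split=> -[g [gf fg]]; exists g. Qed.

Lemma op_local_end (X : C) : @local_end _ op_KCat X <-> local_end X.
Proof.
by split=> -[X_nz Xloc]; split=> // a; case: (Xloc a) => /op_iso; by [left | right].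
Qed.

Lemma op_left_minimal (X Y : C) (f : Mor X Y) :
  @left_minimal _ op_KCat Y X f <-> right_minimal f.
Proof. by split=> f_min g /f_min /op_iso. Qed.

Lemma op_right_minimal (X Y : C) (f : Mor X Y) :
  @right_minimal _ op_KCat Y X f <-> left_minimal f.
Proof. by split=> f_min g /f_min /op_iso. Qed.

Lemma op_additive : additive C -> additive op_KCat.
Proof.
move=> [[Z Z0] biprod]; split=> [|A B]; first by exists Z.
have [S [i1 [i2 [p1 [p2 [? ? ? ? ?]]]]]] := biprod A B.
by exists S, p1, p2, i1, i2.
Qed.

Lemma op_krull_schmidt : krull_schmidt C -> krull_schmidt op_KCat.
Proof.
move=> HKS X; have [n [Xs [inj [pr [pr_inj pr_inj0 sum_id loc]]]]] := HKS X.
exists n, Xs, pr, inj; split=> // [i j ij | i]; last exact/op_local_end.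
by apply: pr_inj0; rewrite eq_sym.
Qed.

Lemma op_ideal (A : mor_class C) : is_ideal A -> is_ideal (op_class A).
Proof.
move=> A_ideal; split=> [X Y|X Y f g|W X Y Z f g h Ag]; rewrite /op_class.
- exact: (ideal0 A_ideal).
- exact: (idealB A_ideal).
- exact: (ideal_compr A_ideal h (ideal_compl A_ideal f Ag)).
Qed.

End Opposite.

Section EndDimension.
Variables (K : fieldType) (C : KCat K).

Definition dim_End (X : C) := \dim (fullv : {vspace Mor X X}).

Variables (Q M : C) (s : Mor Q M) (r : Mor M Q).

Definition conj_End (a : Mor Q Q) : Mor M M := comp s (comp a r).

Lemma conj_End_linear : linear conj_End.
Proof. by move=> a x y; rewrite /conj_End comp_linl comp_linr. Qed.

HB.instance Definition _ :=
  GRing.isLinear.Build K (Mor Q Q) (Mor M M) _ conj_End conj_End_linear.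

(* Conjugation by the retraction embeds End Q into End M, missing the identity. *)
Lemma dim_End_retract_lt : comp r s = idm Q -> comp s r <> idm M ->
  (dim_End Q < dim_End M)%N.
Proof.
move=> rs sr_n1; pose phi := linfun conj_End.
have phiE a : phi a = comp s (comp a r) by rewrite lfunE.
have phi_inj : lker phi == 0%VS.
  apply/lker0P => a b; rewrite !phiE => /(congr1 (fun x => comp r (comp x s))).
  by rewrite -!compA !(compA r s) rs !comp_id_l !comp_id_r.
have dim_img : \dim (phi @: fullv) = dim_End Q.
  by apply: limg_dim_eq; rewrite (eqP phi_inj) capv0.
rewrite ltnNge; apply/negP => le_MQ.
have /eqP img_full : (phi @: fullv == fullv)%VS by rewrite eqEdim subvf dim_img.
have : idm M \in (phi @: fullv)%VS by rewrite img_full memvf.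
case/memv_imgP => a _; rewrite phiE => a_id; apply: sr_n1.
by rewrite -(comp_id_r (comp s r)) a_id -!compA (compA r s) rs comp_id_l.
Qed.

End EndDimension.

Section MinimalApproximations.
Variables (K : fieldType) (C : KCat K) (A : mor_class C).
Hypotheses (Hadd : additive C) (HKS : krull_schmidt C) (A_ideal : is_ideal A).
Implicit Types X M S : C.

Lemma exists_source_map X M (f : Mor X M) :
  left_approx A f -> exists M' (f' : Mor X M'), source_map A f'.
Proof.
have [n] := ubnP (dim_End M); elim: n M f => // n IH M f ltMn f_approx.
case: (classic (left_minimal f)) => [f_min | f_nmin]; first by exists M, f.
have [g [gf g_niso]] : exists g, comp g f = f /\ ~ iso g.
  apply: NNPP => no_g; apply: f_nmin => g gf; apply: NNPP => g_niso.
  by apply: no_g; exists g.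
have [e [e_idem ef e_n1]] := fitting_idempotent g_niso gf.
have [Q [r [s [rs sr]]]] := idempotent_splits Hadd HKS e_idem.
apply: (IH Q (comp r f)).
  by rewrite -ltnS (leq_trans _ ltMn) // ltnS (dim_End_retract_lt rs) // sr.
split=> [|X' j /f_approx.2 [h ->]]; first by apply: ideal_compl; case: f_approx.
by exists (comp h s); rewrite -{1}ef -sr !compA.
Qed.

Lemma source_map_right_approx X M S (f : Mor X M) (w : Mor X S) :
  source_map A f -> left_approx A w -> right_approx A w -> right_approx A f.
Proof.
move=> [[Af f_approx] f_min] [Aw w_approx] [_ w_rapprox]; split=> // W psi A_psi.
have [l fl] := w_approx _ f Af; have [k wk] := f_approx _ w Aw.
have lkf : comp (comp l k) f = f by rewrite -compA -wk -fl.
have [m [mlk _]] := f_min _ lkf.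
have mf : comp m f = f by rewrite -{1}lkf compA mlk comp_id_l.
have [c kpsi] := w_rapprox _ (comp k psi) (ideal_compl A_ideal k A_psi).
exists c; rewrite -(comp_id_l psi) -mlk -!compA kpsi (compA l w) -fl.
by rewrite compA mf.
Qed.

Lemma local_right_minimal X M (f : Mor X M) :
  local_end X -> f <> 0 -> right_minimal f.
Proof.
move=> [_ Xloc] f_n0 g fg; case: (Xloc g) => // [[h [_ gh]]]; case: f_n0.
by rewrite -(comp_id_r f) -gh compA compBr comp_id_r fg subrr comp0l.
Qed.

End MinimalApproximations.

Section SinkMaps.
Variables (K : fieldType) (C : KCat K) (A : mor_class C).
Hypotheses (Hadd : additive C) (HKS : krull_schmidt C) (A_ideal : is_ideal A).
Implicit Types X M S : C.

Lemma exists_sink_map X M (f : Mor M X) :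
  right_approx A f -> exists M' (f' : Mor M' X), sink_map A f'.
Proof.
move=> f_approx.
have [M' [f' [f'_approx /op_left_minimal f'_min]]] :=
  exists_source_map (op_additive Hadd) (op_krull_schmidt HKS) (op_ideal A_ideal) f_approx.
by exists M', f'.
Qed.

Lemma sink_map_left_approx X M S (g : Mor M X) (h : Mor S X) :
  sink_map A g -> right_approx A h -> left_approx A h -> left_approx A g.
Proof.
move=> [g_approx /op_left_minimal g_min].
exact: (source_map_right_approx (op_ideal A_ideal) (conj g_approx g_min)).
Qed.

Lemma local_left_minimal X M (f : Mor M X) :
  local_end X -> f <> 0 -> left_minimal f.
Proof.
by move=> /op_local_end Xloc f_n0; apply/op_right_minimal; apply: local_right_minimal.
Qed.

End SinkMaps.

Section Biapproximations.
Variables (K : fieldType) (C : KCat K) (A : mor_class C).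
Hypothesis A_ideal : is_ideal A.
Implicit Types X Y S W : C.

Definition biapprox X Y (f : Mor X Y) := left_approx A f /\ right_approx A f.

Lemma biapprox_iso X S S' (f : Mor X S) (a : Mor S S') :
  iso a -> biapprox f -> biapprox (comp a f).
Proof.
move=> [a' [a'a aa']] [[Af f_l] [_ f_r]].
have Aaf : A (comp a f) by apply: ideal_compl.
split; split=> // W.
  move=> phi /f_l [c ->]; exists (comp c a').
  by rewrite compA_mid a'a comp_id_l.
move=> psi A_psi; have [d a'psi] := f_r _ _ (ideal_compl A_ideal a' A_psi).
by exists d; rewrite -compA -a'psi compA aa' comp_id_l.
Qed.

Hypothesis Hadd : additive C.
Hypothesis biapprox_local : forall X, local_end X -> exists S (f : Mor X S), biapprox f.

Lemma local_sum_biapprox Y (E : Mor Y Y) : local_sum E ->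
  exists S (f : Mor Y S), [/\ comp f E = f, right_approx A f
    & forall W (phi : Mor Y W), A phi -> exists c, comp phi E = comp c f].
Proof.
elim=> [|E' X i p _ [S' [f' [f'E' f'_r f'_l]]] Xloc pi E'i pE'].
  have [Z Z0] := Hadd.1; exists Z, 0; split; first exact: comp0l.
    split=> [|W psi _]; first exact: (ideal0 A_ideal).
    by exists 0; rewrite comp0r (mor_to_zero psi Z0).
  by move=> W phi _; exists 0; rewrite comp0l comp0r.
have [SX [fX [fX_l fX_r]]] := biapprox_local Xloc.
have [B [j1 [j2 [q1 [q2 [qj1 qj2 qj21 qj12 jq]]]]]] := Hadd.2 S' SX.
have f'i : comp f' i = 0 by rewrite -f'E' -compA E'i comp0r.
exists B, (comp j1 f' + comp j2 (comp fX p)); split.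
- rewrite compDl !compDr -!compA f'E' (compA f' i) f'i pE' (compA p i) pi.
  by rewrite comp0l !comp0r comp_id_l addr0 add0r.
- split=> [|W psi A_psi].
    apply: (idealD A_ideal); apply: (ideal_compl A_ideal); first by case: f'_r.
    by apply: (ideal_compr A_ideal); case: fX_l.
  have [d1 q1psi] := f'_r.2 _ _ (ideal_compl A_ideal q1 A_psi).
  have [d2 q2psi] := fX_r.2 _ _ (ideal_compl A_ideal q2 A_psi).
  exists (comp E' d1 + comp i d2).
  rewrite -(comp_id_l psi) -jq compDl -!compA q1psi q2psi compDl !compDr -!compA.
  rewrite (compA f' E') f'E' (compA f' i) f'i (compA p E') pE' (compA p i) pi.
  by rewrite !comp0l !comp0r comp_id_l addr0 add0r.
- move=> W phi A_phi; have [c' phiE'] := f'_l _ _ A_phi.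
  have [cX phii] := fX_l.2 _ _ (ideal_compr A_ideal i A_phi).
  exists (comp c' q1 + comp cX q2).
  rewrite compDr phiE' compA phii compDl !compDr -!compA (compA q1 j1) qj1.
  rewrite (compA q1 j2) qj12 (compA q2 j1) qj21 (compA q2 j2) qj2.
  by rewrite !comp0l !comp0r !comp_id_l addr0 add0r.
Qed.

Lemma exists_biapprox_from : krull_schmidt C ->
  forall Y, exists S (f : Mor Y S), biapprox f.
Proof.
move=> HKS Y.
have [S [f [_ f_r f_l]]] := local_sum_biapprox (krull_schmidt_local_sum HKS Y).
exists S, f; split=> //; split=> [|W phi /f_l [c]]; first by case: f_r.
by rewrite comp_id_r => ->; exists c.
Qed.

End Biapproximations.

Section BiapproximationsInto.
Variables (K : fieldType) (C : KCat K) (A : mor_class C).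
Hypotheses (A_ideal : is_ideal A) (Hadd : additive C) (HKS : krull_schmidt C).
Hypothesis biapprox_local :
  forall X : C, local_end X -> exists S (f : Mor S X), biapprox A f.

Lemma exists_biapprox_into Y : exists S (f : Mor S Y), biapprox A f.
Proof.
have biapprox_local_op (X : op_KCat C) : @local_end _ (op_KCat C) X ->
    exists S (f : Mor X S), biapprox (op_class A) f.
  by move=> /op_local_end /biapprox_local [S [f [f_l f_r]]]; exists S, f.
have [S [f [f_r f_l]]] := exists_biapprox_from (op_ideal A_ideal) (op_additive Hadd)
  biapprox_local_op (op_krull_schmidt HKS) Y.
by exists S, f.
Qed.

End BiapproximationsInto.

Section Shift.
Variables (K : fieldType) (C : KCat K) (T : Triangulated C).
Implicit Types X Y Z W : C.

Lemma shmD X Y (f g : Mor X Y) : shm T (f + g) = shm T f + shm T g.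
Proof. by have := shm_lin T 1 f g; rewrite !scale1r. Qed.

Lemma shm0 X Y : shm T (0 : Mor X Y) = 0.
Proof. by apply: (addrI (shm T 0)); rewrite -shmD !addr0. Qed.

Lemma shmN X Y (f : Mor X Y) : shm T (- f) = - shm T f.
Proof. by apply: (addrI (shm T f)); rewrite -shmD !subrr shm0. Qed.

Lemma shmB X Y (f g : Mor X Y) : shm T (f - g) = shm T f - shm T g.
Proof. by rewrite shmD shmN. Qed.

Lemma shm_iso X Y (f : Mor X Y) : iso (shm T f) <-> iso f.
Proof.
split=> [[g' [g'f fg']] | [g [gf fg]]]; last first.
  by exists (shm T g); rewrite -!shm_comp gf fg !shm_id.
have [g g'E] := shm_surj g'; rewrite -g'E in g'f fg'.
by exists g; split; apply: (@shm_inj _ _ T); rewrite shm_comp shm_id.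
Qed.

Lemma local_end_sh X : local_end (sh T X) <-> local_end X.
Proof.
split=> -[X_nz Xloc]; split.
- by apply: contra X_nz => /eqP X0; rewrite -shm_id X0 shm0.
- by move=> a; case: (Xloc (shm T a)); rewrite -?shm_id -?shmB shm_iso; by [left | right].
- apply: contra X_nz => /eqP X0; apply/eqP.
  by apply: (@shm_inj _ _ T); rewrite shm_id X0 shm0.
- move=> a; have [a0 <-] := shm_surj a.
  by case: (Xloc a0); rewrite -(shm_iso) ?shmB ?shm_id; by [left | right].
Qed.

End Shift.

Section Triangles.
Variables (K : fieldType) (C : KCat K) (T : Triangulated C).
Hypothesis Hzero : exists Z : C, is_zero Z.
Implicit Types X Y Z W : C.

Lemma dist_comp12 X Y Z (f : Mor X Y) (g : Mor Y Z) (h : Mor Z (sh T X)) :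
  dist T f g h -> comp g f = 0.
Proof.
move=> fgh; have [Z0 Z00] := Hzero.
have [c [cg0 _]] := dist_morph (dist_idm T X Z00) fgh (b := f) (a := idm X) erefl.
by rewrite -cg0 comp0r.
Qed.

Lemma dist_comp31 X Y Z (f : Mor X Y) (g : Mor Y Z) (h : Mor Z (sh T X)) :
  dist T f g h -> comp (shm T f) h = 0.
Proof.
move/dist_rot/dist_rot/dist_comp12.
by rewrite compNl => /eqP; rewrite oppr_eq0 => /eqP.
Qed.

Lemma dist_coker X Y Z W (f : Mor X Y) (g : Mor Y Z) (h : Mor Z (sh T X))
  (phi : Mor Y W) : dist T f g h -> comp phi f = 0 -> exists c, phi = comp c g.
Proof.
move=> fgh phif; have [Z0 Z00] := Hzero.
have W_dist : dist T (0 : Mor Z0 W) (idm W) 0.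
  apply/dist_rot; rewrite shm0 oppr0; apply: dist_idm.
  by rewrite /is_zero -shm_id Z00 shm0.
have [c [cg _]] := dist_morph fgh W_dist (b := phi) (a := 0)
  (etrans phif (esym (comp0r _ _))).
by exists c; rewrite cg comp_id_l.
Qed.

Lemma dist_ker X Y Z W (f : Mor X Y) (g : Mor Y Z) (h : Mor Z (sh T X))
  (phi : Mor W Y) : dist T f g h -> comp g phi = 0 -> exists a, phi = comp f a.
Proof.
move=> /dist_rot ghf gphi; have [Z0 Z00] := Hzero.
have /dist_rot W_dist := dist_idm T W Z00.
have [c [_ c_phi]] := dist_morph W_dist ghf (a := phi) (b := 0)
  (etrans (comp0l _ _) (esym gphi)).
have [a ac] := shm_surj c; exists a; apply: (@shm_inj _ _ T).
move: c_phi; rewrite shm_id compNr comp_id_r compNl -ac -shm_comp => /eqP.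
by rewrite eqr_opp => /eqP.
Qed.

Lemma dist_ext3 Y Z (w : Mor Y (sh T Z)) :
  exists N (u : Mor Z N) (v : Mor N Y), dist T u v w.
Proof.
have [Q [x [y wxy]]] := dist_ext T w.
have [N [b [b' [b'b bb']]]] := sh_esurj T Q.
have wxy' : dist T w (comp b' x) (comp y b).
  apply: (dist_iso wxy (a := idm Y) (b := idm (sh T Z)) (c := b'));
    rewrite ?comp_id_l ?comp_id_r //.
  - exact: iso_idm.
  - exact: iso_idm.
  - by exists b.
  - by rewrite shm_id comp_id_l -compA bb' comp_id_r.
have [u uE] := shm_surj (comp b' x); have [v vE] := shm_surj (comp y b).
exists N, (- u), (- v).
by apply/dist_rot/dist_rot; rewrite !shmN !opprK uE vE.
Qed.

End Triangles.

Section Ghosts.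
Variables (K : fieldType) (C : KCat K) (T : Triangulated C) (I : mor_class C).
Hypothesis I_ideal : is_ideal I.
Implicit Types X Y Z W : C.

Lemma Gh_ideal : is_ideal (Gh I).
Proof.
split=> [X Y W i _|X Y f g Ghf Ghg W i Ii|W X Y Z f g h Ghg V i Ii]; first exact: comp0l.
  by rewrite compBl Ghf ?Ghg ?subrr.
by rewrite -!compA (Ghg _ _ (ideal_compl I_ideal f Ii)) comp0r.
Qed.

Lemma Gh_ObI_eq0 X Y (f : Mor X Y) : ObI I X -> Gh I f -> f = 0.
Proof. by move=> IX Ghf; rewrite -(comp_id_r f) Ghf. Qed.

Lemma shift_ideal_shm Z Y (j : Mor Z Y) : I j -> shift_ideal T I (shm T j).
Proof.
move=> Ij; exists Z, Y, (idm _), (idm _), j.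
by rewrite comp_id_l comp_id_r; split=> //; exact: iso_idm.
Qed.

Lemma shift_ideal_sh Z W (i : Mor (sh T Z) W) : shift_ideal T I i ->
  exists Y (b : Mor (sh T Y) W) (j : Mor Z Y), I j /\ i = comp b (shm T j).
Proof.
move=> [X' [Y' [a [b [f [_ _ If ->]]]]]]; have [a0 <-] := shm_surj a.
by exists Y', b, (comp f a0); rewrite shm_comp; split=> //; apply: ideal_compr.
Qed.

End Ghosts.

Section GhostTriangles.
Variables (K : fieldType) (C : KCat K) (T : Triangulated C) (I : mor_class C).
Hypotheses (I_ideal : is_ideal I) (Hzero : exists Z : C, is_zero Z).
Implicit Types X Y Z W N Q : C.

Lemma dist_Gh_left_approx N Y Q (v : Mor N Y) (w : Mor Y Q) (x : Mor Q (sh T N)) :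
  right_approx I v -> dist T v w x -> left_approx (Gh I) w.
Proof.
move=> [Iv v_r] vwx; split=> [W i /v_r [d ->]|W phi Ghphi].
  by rewrite compA (dist_comp12 Hzero vwx) comp0l.
exact: (dist_coker Hzero vwx (Ghphi _ _ Iv)).
Qed.

Lemma dist_shm_I_comp0 Z N Q W (u : Mor Z N) (v : Mor N Q) (w : Mor Q (sh T Z))
  (j : Mor Z W) : left_approx I u -> dist T u v w -> I j -> comp (shm T j) w = 0.
Proof.
by move=> [_ u_l] uvw /u_l [d ->]; rewrite shm_comp -compA (dist_comp31 Hzero uvw) comp0r.
Qed.

Lemma dist_Gh_right_approx
    (Gh_CoGh : forall X Y (f : Mor X Y), Gh I f <-> CoGh (shift_ideal T I) f)
    Z N Q (u : Mor Z N) (v : Mor N Q) (w : Mor Q (sh T Z)) :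
  left_approx I u -> dist T u v w -> right_approx (Gh I) w.
Proof.
move=> u_l uvw; have /dist_rot/dist_rot wuv := uvw; split=> [|W psi Ghpsi].
  apply/Gh_CoGh => W i /(shift_ideal_sh I_ideal) [Y [b [j [Ij ->]]]].
  by rewrite -compA (dist_shm_I_comp0 u_l uvw Ij) comp0r.
apply: (dist_ker Hzero wuv); case: u_l => Iu _.
by rewrite compNl ((Gh_CoGh _ _ _).1 Ghpsi _ _ (shift_ideal_shm T Iu)) oppr0.
Qed.

Lemma dist_I_notObI_third_neq0 N Y Z (u : Mor Z N) (v : Mor N Y) (w : Mor Y (sh T Z)) :
  dist T u v w -> I v -> ~ ObI I Y -> w <> 0.
Proof.
move=> /dist_rot vwu Iv YnI w0; apply: YnI.
have [a aE] := dist_ker Hzero vwu (phi := idm Y) (etrans (comp_id_r w) w0).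
by rewrite /ObI aE; apply: ideal_compr.
Qed.

Lemma dist_I_notObI_first_neq0 X M Y (f : Mor X M) (g : Mor M Y) (h : Mor Y (sh T X)) :
  dist T f g h -> I f -> ~ ObI I X -> h <> 0.
Proof.
move=> /dist_rot/dist_rot hfg If XnI h0; apply: XnI; rewrite /ObI.
have [c cE] := dist_coker Hzero hfg (phi := idm (sh T X)) (etrans (comp_id_l h) h0).
have [c0 c0E] := shm_surj c.
have -> : idm X = comp (- c0) f.
  by apply: (@shm_inj _ _ T); rewrite shm_id cE -c0E compNr -shm_comp compNl shmN.
exact: ideal_compl.
Qed.

End GhostTriangles.

Section Forward.
Variables (K : fieldType) (C : KCat K) (T : Triangulated C) (I : mor_class C).
Hypotheses (Hadd : additive C) (HKS : krull_schmidt C) (I_ideal : is_ideal I).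
Hypothesis HAR : AR_ideal T I.
Let Hzero : exists Z : C, is_zero Z := Hadd.1.
Implicit Types X Y Z W M N : C.

Lemma AR_Gh_CoGh X Y (phi : Mor X Y) : Gh I phi -> CoGh (shift_ideal T I) phi.
Proof.
move=> Ghphi W _ [X' [Y' [a [b [f [_ _ If ->]]]]]].
have [_ _ AR_Y] := HAR; have [Z [N [u [v [w [uvw u_l v_r]]]]]] := AR_Y X.
have /dist_rot vwu := uvw.
have [c aphi] := (dist_Gh_left_approx Hzero v_r vwu).2 _ (comp a phi)
  (ideal_compl (Gh_ideal I_ideal) a Ghphi).
have [c0 c0E] := shm_surj c.
rewrite -!compA aphi -c0E (compA (shm T f)) -shm_comp.
by rewrite (dist_shm_I_comp0 Hzero u_l uvw (ideal_compr I_ideal c0 If)) comp0r.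
Qed.

Lemma AR_CoGh_Gh X Y (phi : Mor X Y) : CoGh (shift_ideal T I) phi -> Gh I phi.
Proof.
move=> CoGhphi W i Ii.
have [B [al [al' [al'al alal']]]] := sh_esurj T Y.
have [_ AR_X _] := HAR; have [M [Y0 [f [g [h [fgh f_l g_r]]]]]] := AR_X B.
have Ishf : shift_ideal T I (comp (shm T f) al').
  exists B, M, al', (idm _), f; rewrite comp_id_l; split=> //; last by case: f_l.
    by exists al.
  exact: iso_idm.
have /dist_rot ghf := fgh; have /dist_rot hfg := ghf.
have [c al'phi] : exists c, comp al' phi = comp h c.
  by apply: (dist_ker Hzero hfg); rewrite compNl compA CoGhphi ?oppr0.
have Ghh := (dist_Gh_left_approx Hzero g_r ghf).1.
rewrite -[phi]comp_id_l -alal' -!compA (compA al' phi) al'phi -compA.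
by rewrite (Ghh _ _ (ideal_compl I_ideal c Ii)) comp0r.
Qed.

Lemma AR_Gh_CoGh_iff X Y (phi : Mor X Y) : Gh I phi <-> CoGh (shift_ideal T I) phi.
Proof. by split; [apply: AR_Gh_CoGh | apply: AR_CoGh_Gh]. Qed.

Lemma AR_source_sink X : indecomposable X -> ~ ObI I X ->
  forall M (f : Mor X M), source_map (Gh I) f -> sink_map (Gh I) f.
Proof.
move=> Xind XnI M f f_src.
have [_ _ AR_Y] := HAR; have [Z [N [u [v [w [uvw u_l v_r]]]]]] := AR_Y X.
have /dist_rot vwu := uvw.
have w_l := dist_Gh_left_approx Hzero v_r vwu.
have w_r := dist_Gh_right_approx I_ideal Hzero AR_Gh_CoGh_iff u_l uvw.
split; first exact: (source_map_right_approx (Gh_ideal I_ideal) f_src w_l w_r).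
apply: local_right_minimal (indecomposable_local_end Hadd HKS Xind) _ => f0.
have [k wk] := f_src.1.2 _ w w_l.1.
by apply: (dist_I_notObI_third_neq0 I_ideal Hzero uvw v_r.1 XnI); rewrite wk f0 comp0r.
Qed.

Lemma AR_sink_source X : indecomposable X -> ~ ObI I X ->
  forall N (g : Mor N (sh T X)), sink_map (Gh I) g -> source_map (Gh I) g.
Proof.
move=> Xind XnI N g g_snk.
have [_ AR_X _] := HAR; have [M [Y0 [f [g0 [h [fgh f_l g0_r]]]]]] := AR_X X.
have /dist_rot g0hf := fgh.
have h_l := dist_Gh_left_approx Hzero g0_r g0hf.
have h_r := dist_Gh_right_approx I_ideal Hzero AR_Gh_CoGh_iff f_l fgh.
split; first exact: (sink_map_left_approx (Gh_ideal I_ideal) g_snk h_r h_l).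
apply: local_left_minimal; first by apply/local_end_sh; apply: indecomposable_local_end.
move=> g0'; have [b hb] := g_snk.1.2 _ h h_l.1.
by apply: (dist_I_notObI_first_neq0 I_ideal Hzero fgh f_l.1 XnI); rewrite hb g0' comp0l.
Qed.

End Forward.

Section Backward.
Variables (K : fieldType) (C : KCat K) (T : Triangulated C) (I : mor_class C).
Hypotheses (Hadd : additive C) (HKS : krull_schmidt C).
Hypotheses (I_ideal : is_ideal I) (Hff : functorially_finite I).
Hypothesis Gh_CoGh : forall X Y (f : Mor X Y), Gh I f <-> CoGh (shift_ideal T I) f.
Let Hzero : exists Z : C, is_zero Z := Hadd.1.
Implicit Types X Y Z W M N : C.

Lemma biapprox_Gh_left_approx_I Y Z N (u : Mor Z N) (v : Mor N Y) (w : Mor Y (sh T Z)) :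
  biapprox (Gh I) w -> dist T u v w -> left_approx I u.
Proof.
move=> [w_l w_r] /dist_rot/dist_rot wuv; split=> [|W j Ij].
  have [N' [u' u'_l]] := (Hff Z).1; have [Q [k [r u'kr]]] := dist_ext T u'.
  have [x rx] := w_r.2 _ r (dist_Gh_right_approx I_ideal Hzero Gh_CoGh u'_l u'kr).1.
  have /dist_rot/dist_rot ru'k := u'kr.
  have [c [cu' _]] := dist_morph ru'k wuv (a := x) (b := idm _) (etrans (comp_id_l r) rx).
  have [c0 c0E] := shm_surj c.
  have -> : u = comp c0 u'.
    apply: (@shm_inj _ _ T); move: cu'; rewrite compNr compNl comp_id_r => /oppr_inj.
    by rewrite shm_comp c0E.
  by apply: ideal_compl; case: u'_l.
have [c cE] := dist_coker Hzero wuv ((Gh_CoGh _).1 w_l.1 _ _ (shift_ideal_shm T Ij)).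
have [c0 c0E] := shm_surj c; exists (- c0); apply: (@shm_inj _ _ T).
by rewrite cE -c0E compNr shm_comp shmN compNl.
Qed.

Lemma biapprox_Gh_right_approx_I Y Z N (u : Mor Z N) (v : Mor N Y) (w : Mor Y (sh T Z)) :
  biapprox (Gh I) w -> dist T u v w -> right_approx I v.
Proof.
move=> [w_l w_r] uvw; have /dist_rot/dist_rot wuv := uvw; split=> [|W i Ii].
  have [N' [v' v'_r]] := (Hff Y).2; have [Q [w' [x v'w'x]]] := dist_ext T v'.
  have [a w'a] := w_l.2 _ w' (dist_Gh_left_approx Hzero v'_r v'w'x).1.
  have /dist_rot w'xv' := v'w'x.
  have [c [_ cv]] := dist_morph wuv w'xv' (a := idm Y) (b := a)
    (etrans (esym w'a) (esym (comp_id_r w'))).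
  have [c0 c0E] := shm_surj c.
  have -> : v = comp v' c0.
    apply: (@shm_inj _ _ T); move: cv; rewrite shm_id comp_id_l compNl => /oppr_inj.
    by rewrite shm_comp c0E.
  by apply: ideal_compr; case: v'_r.
by move/dist_rot: uvw => vwu; apply: (dist_ker Hzero vwu (w_l.1 _ _ Ii)).
Qed.

Lemma biapprox_Gh_AR_triangle Y Z (w : Mor Y (sh T Z)) : biapprox (Gh I) w ->
  exists N (u : Mor Z N) (v : Mor N Y),
    [/\ dist T u v w, left_approx I u & right_approx I v].
Proof.
move=> w_bi; have [N [u [v uvw]]] := dist_ext3 w.
exists N, u, v; split=> //.
  exact: biapprox_Gh_left_approx_I w_bi uvw.
exact: biapprox_Gh_right_approx_I w_bi uvw.
Qed.

Hypothesis source_sink : forall X : C, indecomposable X -> ~ ObI I X ->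
  (forall M (f : Mor X M), source_map (Gh I) f -> sink_map (Gh I) f) /\
  (forall N (g : Mor N (sh T X)), sink_map (Gh I) g -> source_map (Gh I) g).

Lemma biapprox_Gh_from_local X : local_end X -> exists S (f : Mor X S), biapprox (Gh I) f.
Proof.
move=> Xloc; case: (classic (ObI I X)) => [IX | XnI].
  have [Z Z0] := Hzero; exists Z, 0; split; split.
  - exact: (ideal0 (Gh_ideal I_ideal)).
  - by move=> W phi /(Gh_ObI_eq0 IX) ->; exists 0; rewrite comp0l.
  - exact: (ideal0 (Gh_ideal I_ideal)).
  - by move=> W psi _; exists 0; rewrite comp0r (mor_to_zero psi Z0).
have [N [v v_r]] := (Hff X).2; have [Q [w [x vwx]]] := dist_ext T v.
have [M [f f_src]] := exists_source_map Hadd HKS (Gh_ideal I_ideal)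
  (dist_Gh_left_approx Hzero v_r vwx).
have f_snk := (source_sink (local_end_indecomposable Xloc) XnI).1 _ _ f_src.
by exists M, f; split; [case: f_src | case: f_snk].
Qed.

Lemma biapprox_Gh_into_local Y : local_end Y -> exists S (f : Mor S Y), biapprox (Gh I) f.
Proof.
move=> Yloc; have [X [al al_iso]] := sh_esurj T Y.
have [al' [al'al alal']] := al_iso.
have Xloc : local_end X.
  by apply/(local_end_sh T); apply: (iso_local_end (i := al')) Yloc; exists al.
case: (classic (ObI I X)) => [IX | XnI].
  have [Z Z0] := Hzero; exists Z, 0; split; split.
  - exact: (ideal0 (Gh_ideal I_ideal)).
  - by move=> W phi _; exists 0; rewrite comp0r (mor_from_zero phi Z0).
  - exact: (ideal0 (Gh_ideal I_ideal)).
  move=> W psi Ghpsi; exists 0; rewrite comp0r.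
  have Ial' : shift_ideal T I al'.
    exists X, X, al', (idm _), (idm X); rewrite shm_id !comp_id_l; split=> //.
      by exists al.
    exact: iso_idm.
  by rewrite -(comp_id_l psi) -alal' -compA ((Gh_CoGh _).1 Ghpsi _ _ Ial') comp0r.
have [N [u u_l]] := (Hff X).1; have [Q [k [r ukr]]] := dist_ext T u.
have [M [g g_snk]] := exists_sink_map Hadd HKS (Gh_ideal I_ideal)
  (dist_Gh_right_approx I_ideal Hzero Gh_CoGh u_l ukr).
have g_src := (source_sink (local_end_indecomposable Xloc) XnI).2 _ _ g_snk.
exists M, (comp al g); apply: (biapprox_iso (Gh_ideal I_ideal) al_iso).
by split; [case: g_src | case: g_snk].
Qed.

Theorem ghost_conditions_AR_ideal : AR_ideal T I.
Proof.
split=> // [X | Y].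
  have [Y [h h_bi]] := exists_biapprox_into (Gh_ideal I_ideal) Hadd HKS
    biapprox_Gh_into_local (sh T X).
  have [N [u [v [uvh u_l v_r]]]] := biapprox_Gh_AR_triangle h_bi.
  by exists N, Y, u, v, h.
have [S [f f_bi]] := exists_biapprox_from (Gh_ideal I_ideal) Hadd
  biapprox_Gh_from_local HKS Y.
have [Z [al [al' [al'al alal']]]] := sh_esurj T S.
have al'_iso : iso al' by exists al.
have [N [u [v [uvw u_l v_r]]]] :=
  biapprox_Gh_AR_triangle (biapprox_iso (Gh_ideal I_ideal) al'_iso f_bi).
by exists Z, N, u, v, (comp al' f).
Qed.

End Backward.

Theorem theorem3p8 (K : closedFieldType) (C : KCat K)
  (Hadd : additive C) (HKS : krull_schmidt C) (T : Triangulated C)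
  (I : mor_class C) (HI : is_ideal I) (Hff : functorially_finite I) :
  AR_ideal T I <->
  ((forall (X Y : C) (f : Mor X Y), Gh I f <-> CoGh (shift_ideal T I) f) /\
   (forall X : C, indecomposable X -> ~ ObI I X ->
      (forall (M : C) (f : Mor X M), source_map (Gh I) f -> sink_map (Gh I) f) /\
      (forall (N : C) (g : Mor N (sh T X)), sink_map (Gh I) g -> source_map (Gh I) g))).
Proof.
split=> [HAR | [Gh_CoGh source_sink]]; last exact: ghost_conditions_AR_ideal.
split=> [X Y f | X Xind XnI]; first exact: (AR_Gh_CoGh_iff Hadd HI HAR).
split; first exact: (AR_source_sink Hadd HKS HI HAR Xind XnI).
exact: (AR_sink_source Hadd HKS HI HAR Xind XnI).
Qed.
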